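(* Let $n\ge 2$ and $m$ be positive integers, $\lambda=(\lambda_1,\dots,\lambda_n)\in\mathcal{P}^m_n$, and $k_{i,j}=k_{i,j}(\lambda)$ ($1\le i\le j\le n$) as defined below. Consider (1) $\lambda^{(1)}=(\lambda_2,\lambda_3,\dots,\lambda_n)$; (2) $\lambda^{(2)}$ with parts $\lambda^{(2)}_i=\lambda_i-k_{i,n}$, $1\le i\le n-1$; (3) $\lambda^{(3)}$ with parts $\lambda^{(3)}_i=\lambda^{(2)}_i-k_{i,n-1}$, $1\le i\le n-2$; (4) $\lambda^{(4)}$ with parts $\lambda^{(4)}_i=\lambda_i-k_{i,n-1}$, $1\le i\le n-1$. Then $\lambda^{(1)},\lambda^{(2)},\lambda^{(4)}\in\mathcal{P}^m_{n-1}$ and $\lambda^{(3)}\in\mathcal{P}^m_{n-2}$. Moreover, writing $k^{(h)}_{i,j}=k_{i,j}(\lambda^{(h)})$ (computed with $n-1$ in place of $n$ for $h\in\{1,2,4\}$, and with $n-2$ in place of $n$ for $h=3$), we have: $k^{(1)}_{i,j}=k_{i+1,j+1}$ for $1\le i\le j\le n-1$; $k^{(2)}_{i,j}=k_{i,j}$ for $1\le i\le j\le n-1$; $k^{(3)}_{i,j}=k_{i,j}$ for $1\le i\le j\le n-2$; $k^{(3)}_{i,j}=k^{(4)}_{i,j}$ for $1\le i\le j\le n-2$; and for $1\le i\le j\le n-1$: $k^{(4)}_{i,j}=k_{i,j+1}$ if $j=n-1$, and $k^{(4)}_{i,j}=k_{i,j}$ if $j\le n-2$.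
   Context: $\mathcal{P}^m_N$ denotes the set of integer partitions $(\mu_1\ge\cdots\ge\mu_N\ge0)$ with $\mu_i\le m(N-i+1)$ for all $i$. For $\mu\in\mathcal{P}^m_N$, integers $k_{i,j}(\mu)$, $1\le i\le j\le N$, are defined recursively (in order of decreasing $i$, and for fixed $i$ decreasing $j$) by $$k_{i,j}(\mu)=\min\left\{m,\left\lceil\frac{\mu_i-\sum_{\ell=j+1}^N k_{i,\ell}(\mu)+\sum_{\ell=i+1}^j k_{\ell,j}(\mu)}{j-i+1}\right\rceil\right\}.$$ *)

From HB Require Import structures.
From mathcomp Require Import all_boot all_order all_algebra.
From mathcomp Require Import zify.
Set Implicit Arguments. Unset Strict Implicit. Unset Printing Implicit Defensive.
Import Order.TTheory GRing.Theory Num.Theory.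
Local Open Scope ring_scope.

(* Sequences mu_1, ..., mu_N are represented by functions mu : nat -> int,
   1-indexed (values outside 1..N are irrelevant). *)

Definition inP (m N : nat) (mu : nat -> int) : Prop :=
  [/\ (forall i : nat, (1 <= i)%N -> (i < N)%N -> mu i.+1 <= mu i),
      (forall i : nat, (1 <= i <= N)%N -> 0 <= mu i) &
      (forall i : nat, (1 <= i <= N)%N -> mu i <= (m * (N - i + 1))%:Z)].

(* ceiling of a / b for b > 0 (intdiv's %/ is floor division for b > 0) *)
Definition ceil_div (a b : int) : int := - ((- a) %/ b)%Z.

Fixpoint kf (m N : nat) (mu : nat -> int) (f i j : nat) : int :=
  match f with
  | 0%N => 0
  | f'.+1 =>
      Order.min (m%:Z)
        (ceil_div (mu i - (\sum_(j.+1 <= l < N.+1) kf m N mu f' i l)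
                        + (\sum_(i.+1 <= l < j.+1) kf m N mu f' l j))
                  (j - i + 1)%N%:Z)
  end.

(* k_{i,j}(mu) for the parameters m, N; the fuel (N-i)+(N-j)+1 bounds the
   depth of the recursion (see kk_rec below). *)
Definition kk (m N : nat) (mu : nat -> int) (i j : nat) : int :=
  kf m N mu (N - i + (N - j)).+1 i j.

Lemma kf_stable (m N : nat) (mu : nat -> int) (f g i j : nat) :
  (i <= j <= N)%N -> (N - i + (N - j) < f)%N -> (N - i + (N - j) < g)%N ->
  kf m N mu f i j = kf m N mu g i j.
Proof.
elim: f g i j => [|f IH] [|g] i j /andP[hij hjN] hf hg //=.
congr (Order.min _ (ceil_div (_ - _ + _) _)).
  apply: eq_big_nat => l /andP[h1 h2]; apply: IH; first (apply/andP; split); lia.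
apply: eq_big_nat => l /andP[h1 h2]; apply: IH; first (apply/andP; split); lia.
Qed.

(* The defining recursion of the paper holds for 1 <= i <= j <= N. *)
Lemma kk_rec (m N : nat) (mu : nat -> int) (i j : nat) :
  (1 <= i)%N -> (i <= j)%N -> (j <= N)%N ->
  kk m N mu i j =
  Order.min (m%:Z)
    (ceil_div (mu i - (\sum_(j.+1 <= l < N.+1) kk m N mu i l)
                    + (\sum_(i.+1 <= l < j.+1) kk m N mu l j))
              (j - i + 1)%N%:Z).
Proof.
move=> h1 hij hjN; rewrite {1}/kk /=.
congr (Order.min _ (ceil_div (_ - _ + _) _)).
  apply: eq_big_nat => l /andP[h3 h4].
  transitivity (kf m N mu (N - i + (N - l)).+1 i l); last by [].
  apply: kf_stable; first (apply/andP; split); lia.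
apply: eq_big_nat => l /andP[h3 h4].
transitivity (kf m N mu (N - l + (N - j)).+1 l j); last by [].
apply: kf_stable; first (apply/andP; split); lia.
Qed.

(* Deleting the last column of the array k(mu) and subtracting it from mu
   leaves the other entries unchanged, because for j < N the recursion for
   k_{i,j} only involves mu_i - sum_{l > j} k_{i,l}; deleting the first row is
   a reindexing.  The estimates 0 <= c_i <= mu_i, mu_i - c_i <= m (N - i) and
   c_{i+1} <= c_i <= c_{i+1} + mu_i - mu_{i+1} for the last column c show that
   mu - c stays in P^m.
   The real content is lam4: subtracting the penultimate column b instead of
   the last column a, the last column of the new array is again a.  This goes
   by downward induction on the row l with the invariant that the defect
   a_l - b_l - a_n lies in {0, 1} whenever a_l < m.  Summed over the rows
   below l, the defects confine the column sums enough to make the two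
   capped ceilings for row l coincide. *)

From HB Require Import structures.
From mathcomp Require Import all_boot all_order all_algebra zify.

Set Implicit Arguments.
Unset Strict Implicit.
Unset Printing Implicit Defensive.

Import Order.TTheory GRing.Theory Num.Theory.
Local Open Scope ring_scope.

Lemma ceil_div_le (a b c : int) : 0 < b -> (ceil_div a b <= c) = (a <= b * c).
Proof. by rewrite /ceil_div => b_gt0; apply/idP/idP => ?; nia. Qed.

Lemma ceil_div_ge (a b c : int) : 0 < b -> (c <= ceil_div a b) = (b * (c - 1) < a).
Proof. by rewrite /ceil_div => b_gt0; apply/idP/idP => ?; nia. Qed.

Lemma min_ceil_divP (M X q v : int) : 0 < q ->
  Order.min M (ceil_div X q) = v <-> [/\ v <= M, q * (v - 1) < X & v = M \/ X <= q * v].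
Proof.
move=> q_gt0; rewrite -(ceil_div_ge _ _ q_gt0) -(ceil_div_le _ _ q_gt0).
by split=> [<-|[]]; [split|]; lia.
Qed.

Lemma min_ceil_div_step (q M x y T v w : int) : 0 < q -> y <= x ->
  Order.min M (ceil_div (y + T) q) = v ->
  Order.min M (ceil_div (x + (v + T)) (q + 1)) = w -> v <= w <= v + (x - y).
Proof.
move=> q_gt0 yx /(min_ceil_divP _ _ _ q_gt0) [v_le v_lo v_hi].
move=> /(min_ceil_divP _ _ _ (addr_gt0 q_gt0 ltr01)) [w_le w_lo w_hi].
apply/andP; split; first by case: w_hi => [->|w_hi]; nia.
by case: v_hi => [v_eq|v_hi]; nia.
Qed.

Lemma nonincr_on (N : nat) (f : nat -> int) :
  (forall i, (1 <= i)%N -> (i < N)%N -> f i.+1 <= f i) ->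
  forall i j, (1 <= i)%N -> (i <= j <= N)%N -> f j <= f i.
Proof.
move=> f_step i j i_ge1 /andP[ij jN].
have D_conv : {in [pred k | 1 <= k <= N]%N &,
    forall i j k : nat, (i < k < j)%N -> k \in [pred k | 1 <= k <= N]%N}.
  by move=> ? ? /[!inE] ? ? ? ?; rewrite inE; lia.
apply: (homo_leq_in (r := fun x y => y <= x) _ _ D_conv) (ij) => //=.
- by move=> ? ? ? le_xy le_zy; apply: le_trans le_zy le_xy.
- by move=> k /[!inE] k_in ?; apply: f_step; lia.
- by rewrite inE; lia.
- by rewrite inE; lia.
Qed.

Lemma inP_mono m N mu : inP m N mu ->
  forall i j, (1 <= i)%N -> (i <= j <= N)%N -> mu j <= mu i.
Proof. by case=> mu_step _ _; apply: nonincr_on. Qed.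

Lemma eq_inP m N (f g : nat -> int) :
  (forall l, (1 <= l <= N)%N -> f l = g l) -> inP m N f -> inP m N g.
Proof.
move=> eq_fg [f_step f_ge0 f_le]; split=> [i i_ge1 iN | i i_in | i i_in].
- by rewrite -!eq_fg; [apply: f_step | lia..].
- by rewrite -eq_fg //; apply: f_ge0.
- by rewrite -eq_fg //; apply: f_le.
Qed.

Lemma inP_behead m N mu : inP m N.+1 mu -> inP m N (fun l => mu l.+1).
Proof.
case=> mu_step mu_ge0 mu_le; split=> i i_in *.
- by apply: mu_step; lia.
- by apply: mu_ge0; lia.
- by have := mu_le i.+1; rewrite subSS; apply; lia.
Qed.

Lemma kk_ind (N : nat) (P : nat -> nat -> Prop) :
  (forall i j, (1 <= i)%N -> (i <= j <= N)%N ->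
     (forall i' j', (1 <= i')%N -> (i' <= j' <= N)%N ->
        (N - i' + (N - j') < N - i + (N - j))%N -> P i' j') -> P i j) ->
  forall i j, (1 <= i)%N -> (i <= j <= N)%N -> P i j.
Proof.
move=> P_rec i j; move: {-1}(N - i + (N - j))%N (leqnn (N - i + (N - j))) => s.
elim: s i j => [|s IH] i j le_s i_ge1 ij_in; apply: P_rec => // i' j' *; first lia.
by apply: IH => //; lia.
Qed.

Lemma down_ind (N : nat) (P : nat -> Prop) :
  (forall i, (1 <= i <= N)%N -> (forall l, (i < l <= N)%N -> P l) -> P i) ->
  forall i, (1 <= i <= N)%N -> P i.
Proof.
move=> P_rec i; move: {-1}(N - i)%N (leqnn (N - i)) => s.
elim: s i => [|s IH] i le_s i_in; apply: P_rec => // l *; first lia.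
by apply: IH; lia.
Qed.

Lemma kk_le_cap m N mu i j : kk m N mu i j <= m%:Z.
Proof. by rewrite /kk /=; lia. Qed.

Lemma kk_col_rec m N mu i : (1 <= i <= N)%N ->
  kk m N mu i N = Order.min m%:Z
    (ceil_div (mu i + \sum_(i.+1 <= l < N.+1) kk m N mu l N) (N - i + 1)%N%:Z).
Proof. by case/andP=> *; rewrite kk_rec // big_geq // subr0. Qed.

Lemma eq_kk m N (f g : nat -> int) :
  (forall l, (1 <= l <= N)%N -> f l = g l) ->
  forall i j, (1 <= i)%N -> (i <= j <= N)%N -> kk m N f i j = kk m N g i j.
Proof.
move=> eq_fg; apply: kk_ind => i j i_ge1 /andP[ij jN] IH.
rewrite !kk_rec // eq_fg; last lia.
by congr (Order.min _ (ceil_div (_ - _ + _) _)); apply: eq_big_nat => l l_in; apply: IH; lia.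
Qed.

Lemma kk_drop_last m N mu i j : (1 <= i)%N -> (i <= j <= N)%N ->
  kk m N (fun l => mu l - kk m N.+1 mu l N.+1) i j = kk m N.+1 mu i j.
Proof.
move: i j; apply: kk_ind => i j i_ge1 /andP[ij jN] IH.
rewrite kk_rec // [RHS]kk_rec ?(leqW jN) // (big_nat_recr N.+1) /=; last lia.
have eq_row : \sum_(j.+1 <= l < N.+1) kk m N (fun l => mu l - kk m N.+1 mu l N.+1) i l
            = \sum_(j.+1 <= l < N.+1) kk m N.+1 mu i l.
  by apply: eq_big_nat => l l_in; apply: IH; lia.
have eq_col : \sum_(i.+1 <= l < j.+1) kk m N (fun l => mu l - kk m N.+1 mu l N.+1) l j
            = \sum_(i.+1 <= l < j.+1) kk m N.+1 mu l j.
  by apply: eq_big_nat => l l_in; apply: IH; lia.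
by rewrite eq_row eq_col opprD addrA addrAC.
Qed.

Lemma kk_behead m N mu i j : (1 <= i)%N -> (i <= j <= N)%N ->
  kk m N (fun l => mu l.+1) i j = kk m N.+1 mu i.+1 j.+1.
Proof.
move: i j; apply: kk_ind => i j i_ge1 /andP[ij jN] IH.
rewrite kk_rec // [RHS]kk_rec // subSS.
have eq_row : \sum_(j.+1 <= l < N.+1) kk m N (fun l => mu l.+1) i l
            = \sum_(j.+2 <= l < N.+2) kk m N.+1 mu i.+1 l.
  rewrite -[j.+2]addn1 -[N.+2]addn1 big_addn addnK.
  by apply: eq_big_nat => l l_in; rewrite addn1 IH //; lia.
have eq_col : \sum_(i.+1 <= l < j.+1) kk m N (fun l => mu l.+1) l j
            = \sum_(i.+2 <= l < j.+2) kk m N.+1 mu l j.+1.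
  rewrite -[i.+2]addn1 -[j.+2]addn1 big_addn addnK.
  by apply: eq_big_nat => l l_in; rewrite addn1 IH //; lia.
by rewrite eq_row eq_col.
Qed.

Section LastColumn.
Variables (m N : nat) (mu : nat -> int).
Hypothesis mu_in : inP m N mu.
Local Notation c i := (kk m N mu i N).

Lemma kk_col_bounds i : (1 <= i <= N)%N -> 0 <= c i <= mu i.
Proof.
move: i; apply: down_ind => i i_in IH.
have q_gt0 : 0 < (N - i + 1)%N%:Z by lia.
have [_ lo hi] := (min_ceil_divP _ _ _ q_gt0).1 (esym (kk_col_rec m mu i_in)).
set T := \sum_(i.+1 <= l < N.+1) c l in lo hi.
have T_ge0 : 0 <= T.
  by rewrite /T big_nat; apply: sumr_ge0 => l /IH /andP[].
have T_le : T <= \sum_(i.+1 <= l < N.+1) mu i.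
  apply: ler_sum_nat => l l_in; have /andP[_ le_mu] := IH l l_in.
  by apply: le_trans le_mu (inP_mono mu_in _ _); lia.
rewrite sumr_const_nat in T_le.
have mu_ge0 : 0 <= mu i by case: mu_in => _ /(_ i i_in).
by apply/andP; split; nia.
Qed.

Lemma kk_col_step i : (1 <= i)%N -> (i < N)%N -> c i.+1 <= c i <= c i.+1 + (mu i - mu i.+1).
Proof.
move=> i_ge1 iN.
have i_in : (1 <= i <= N)%N by lia.
have i1_in : (1 <= i.+1 <= N)%N by lia.
have q_gt0 : 0 < (N - i.+1 + 1)%N%:Z by lia.
have mu_le : mu i.+1 <= mu i by case: mu_in => /(_ i i_ge1 iN).
apply: (min_ceil_div_step q_gt0 mu_le (esym (kk_col_rec m mu i1_in))).
rewrite [RHS](kk_col_rec m mu i_in) [in RHS]big_ltn //.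
by congr (Order.min _ (ceil_div _ _)); lia.
Qed.

Lemma kk_col_mono i j : (1 <= i)%N -> (i <= j <= N)%N -> c j <= c i.
Proof.
apply: (nonincr_on (f := fun k => c k)) => l l_ge1 lN.
by case/andP: (kk_col_step l_ge1 lN).
Qed.

Lemma kk_col_rest i : (1 <= i <= N)%N -> mu i - c i <= (m * (N - i))%N%:Z.
Proof.
move=> i_in; have /andP[c_ge0 _] := kk_col_bounds i_in.
have q_gt0 : 0 < (N - i + 1)%N%:Z by lia.
have [c_cap _ c_hi] := (min_ceil_divP _ _ _ q_gt0).1 (esym (kk_col_rec m mu i_in)).
have T_ge0 : 0 <= \sum_(i.+1 <= l < N.+1) c l.
  rewrite big_nat; apply: sumr_ge0 => l /andP[il lN].
  have l_in : (1 <= l <= N)%N by lia.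
  by case/andP: (kk_col_bounds l_in).
have mu_le : mu i <= (m * (N - i + 1))%N%:Z by case: mu_in => _ _ /(_ i i_in).
rewrite mulnDr muln1 !PoszD !PoszM in c_hi mu_le *.
by case: c_hi => [->|]; nia.
Qed.

End LastColumn.

Lemma inP_drop_last m N mu :
  inP m N.+1 mu -> inP m N (fun l => mu l - kk m N.+1 mu l N.+1).
Proof.
move=> mu_in; split=> [i i_ge1 iN | i i_in | i i_in].
- by have /andP[_] := kk_col_step mu_in i_ge1 (leqW iN); lia.
- have i_in' : (1 <= i <= N.+1)%N by lia.
  by have /andP[] := kk_col_bounds mu_in i_in'; lia.
- have i_in' : (1 <= i <= N.+1)%N by lia.
  have -> : (N - i + 1 = N.+1 - i)%N by lia.
  by have := kk_col_rest mu_in i_in'; lia.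
Qed.

Lemma sumr_nat_unit_bounds (lo hi : nat) (F : nat -> int) :
  (forall t, (lo <= t < hi)%N -> 0 <= F t <= 1) ->
  0 <= \sum_(lo <= t < hi) F t <= (hi - lo)%N%:Z.
Proof.
move=> F_bnd; apply/andP; split.
  by rewrite big_nat; apply: sumr_ge0 => t /F_bnd /andP[].
apply: le_trans (ler_sum_nat (G := fun=> 1) _) _; first by move=> t /F_bnd /andP[_].
by rewrite /= sumr_const_nat natz.
Qed.

(* One row l of the last two columns a = k_{.,n} and b = k_{.,n-1}: here
   p = n - l, A and B are the sums of a and b over the rows below l, and
   d = a_n. *)
Lemma last_cols_uncapped_step (p M lam A B d a b : int) :
  0 < p -> 0 <= d -> 0 <= A - B - (p - 1) * d <= p - 1 ->
  Order.min M (ceil_div (lam + A + d) (p + 1)) = a -> a < M ->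
  Order.min M (ceil_div (lam - a + B) p) = b ->
  0 <= a - b - d <= 1 /\ Order.min M (ceil_div (lam - b + A) p) = a.
Proof.
move=> p_gt0 d_ge0 defects_bnd /(min_ceil_divP _ _ _ (addr_gt0 p_gt0 ltr01)) [_ a_lo a_hi] a_lt.
move=> /(min_ceil_divP _ _ _ p_gt0) [b_le b_lo b_hi].
have b_le_a : b <= a by nia.
have {b_hi} b_hi : lam - a + B <= p * b by case: b_hi; lia.
have x_bnd : 0 <= a - b - d <= 1 by nia.
split=> //; apply/(min_ceil_divP _ _ _ p_gt0).
have {a_hi} a_hi : lam + A + d <= (p + 1) * a by case: a_hi; lia.
split; [exact: ltW | nia | right; nia].
Qed.

Lemma last_cols_capped_step (p M lam A B d b : int) :
  0 < p -> 0 <= A - B - (p - 1) * d ->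
  Order.min M (ceil_div (lam + A + d) (p + 1)) = M ->
  Order.min M (ceil_div (lam - M + B) p) = b ->
  Order.min M (ceil_div (lam - b + A) p) = M.
Proof.
move=> p_gt0 E_ge0 /(min_ceil_divP _ _ _ (addr_gt0 p_gt0 ltr01)) [_ a_lo _].
move=> /(min_ceil_divP _ _ _ p_gt0) [b_le b_lo _].
by apply/(min_ceil_divP _ _ _ p_gt0); split=> //; [nia | left].
Qed.

Section LastTwoColumns.
Variables (m N : nat) (lam : nat -> int).
Hypothesis lam_in : inP m N.+2 lam.
Local Notation a l := (kk m N.+2 lam l N.+2).
Local Notation b l := (kk m N.+2 lam l N.+1).
Local Notation lam2 := (fun l => lam l - a l).
Local Notation lam4 := (fun l => lam l - b l).
Local Notation a' l := (kk m N.+1 lam4 l N.+1).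

Lemma inP_drop_penult : inP m N.+1 lam4.
Proof.
have lam2_in : inP m N.+1 lam2 := inP_drop_last lam_in.
have b_drop l : (1 <= l <= N.+1)%N -> kk m N.+1 lam2 l N.+1 = b l.
  by case/andP=> l_ge1 lN; apply: kk_drop_last; rewrite // lN leqnn.
split=> [i i_ge1 iN | i i_in | i i_in].
- have /andP[_] := kk_col_step lam2_in i_ge1 iN.
  have /andP[a_mono _] := kk_col_step lam_in i_ge1 (leqW iN).
  by rewrite !b_drop; lia.
- have /andP[_] := kk_col_bounds lam2_in i_in.
  have i_in' : (1 <= i <= N.+2)%N by lia.
  by rewrite b_drop //; have /andP[] := kk_col_bounds lam_in i_in'; lia.
- have := kk_col_rest lam2_in i_in; rewrite b_drop //.
  have -> : (m * (N.+1 - i + 1) = m * (N.+1 - i) + m)%N by rewrite mulnDr muln1.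
  by have := kk_le_cap m N.+2 lam i N.+2; lia.
Qed.

Lemma kk_last_col_rec l : (1 <= l <= N.+1)%N ->
  Order.min m%:Z (ceil_div (lam l + \sum_(l.+1 <= t < N.+2) a t + a N.+2)
                           ((N.+1 - l + 1)%N%:Z + 1)) = a l.
Proof.
move=> l_in; have l_in2 : (1 <= l <= N.+2)%N by lia.
rewrite [RHS](kk_col_rec m lam l_in2) (big_nat_recr N.+2) /=; last lia.
by congr (Order.min _ (ceil_div _ _)); [rewrite addrA | lia].
Qed.

Lemma kk_penult_col_rec l : (1 <= l <= N.+1)%N ->
  Order.min m%:Z (ceil_div (lam l - a l + \sum_(l.+1 <= t < N.+2) b t)
                           (N.+1 - l + 1)%N%:Z) = b l.
Proof. by case/andP=> l_ge1 lN; rewrite [RHS]kk_rec ?lN // big_nat1. Qed.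

Lemma kk_last_col_tail l : (1 <= l <= N.+1)%N ->
  (l <= N)%N /\ a l.+1 = m%:Z \/ (forall t, (l < t <= N.+1)%N -> a t < m%:Z).
Proof.
move=> l_in; case: (leqP l N) => [lN | Nl]; last by right => t; lia.
have [a1_cap | /eqP a1_ne] := eqVneq (a l.+1) m%:Z; [by left | right => t t_in].
have t_in2 : (l.+1 <= t <= N.+2)%N by lia.
have := kk_col_mono lam_in (ltn0Sn l) t_in2; have := kk_le_cap m N.+2 lam l.+1 N.+2.
lia.
Qed.

Lemma last_cols_defect_bounds l :
  (forall t, (l < t <= N.+1)%N -> 0 <= a t - b t - a N.+2 <= 1) ->
  0 <= \sum_(l.+1 <= t < N.+2) a t - \sum_(l.+1 <= t < N.+2) b t - (N.+1 - l)%N%:Z * a N.+2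
    <= (N.+1 - l)%N%:Z.
Proof.
move=> defect_bnd.
have := sumr_nat_unit_bounds (F := fun t => a t - b t - a N.+2) (lo := l.+1) (hi := N.+2).
by rewrite !sumrB sumr_const_nat -mulr_natr natz mulrC subSS; apply.
Qed.

Lemma kk_drop_penult_col l : (1 <= l <= N.+1)%N ->
  a' l = a l /\ (a l < m%:Z -> 0 <= a l - b l - a N.+2 <= 1).
Proof.
move: l; apply: down_ind => l l_in IH.
set p := (N.+1 - l + 1)%N%:Z.
have p_gt0 : 0 < p by rewrite /p; lia.
have a_rec := kk_last_col_rec l_in; have b_rec := kk_penult_col_rec l_in.
have a'_rec : Order.min m%:Z (ceil_div (lam l - b l + \sum_(l.+1 <= t < N.+2) a t) p) = a' l.
  rewrite [RHS](kk_col_rec m lam4 l_in); congr (Order.min _ (ceil_div (_ + _) _)).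
  by apply: eq_big_nat => t t_in; case: (IH t _); first lia.
move: a_rec b_rec a'_rec; rewrite -/p.
set A := \sum_(l.+1 <= t < N.+2) a t; set B := \sum_(l.+1 <= t < N.+2) b t; set d := a N.+2.
move=> a_rec b_rec a'_rec.
have N2_in : (1 <= N.+2 <= N.+2)%N by rewrite leqnn.
have /andP[d_ge0 _] := kk_col_bounds lam_in N2_in.
have defects_bnd : (forall t, (l < t <= N.+1)%N -> a t < m%:Z) -> 0 <= A - B - (p - 1) * d <= p - 1.
  move=> tail_lt; have -> : p - 1 = (N.+1 - l)%N%:Z by rewrite /p; lia.
  by apply: last_cols_defect_bounds => t t_in; apply: (IH t t_in).2 (tail_lt t t_in).
have a_le_cap := kk_le_cap m N.+2 lam l N.+2.
case: (ltP (a l) m%:Z) => [a_lt | a_ge].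
  have tail_lt t : (l < t <= N.+1)%N -> a t < m%:Z.
    by move=> t_in; apply: le_lt_trans a_lt; apply: (kk_col_mono lam_in); lia.
  have [defect_l a'E] := last_cols_uncapped_step p_gt0 d_ge0 (defects_bnd tail_lt) a_rec a_lt b_rec.
  by split; [rewrite -a'_rec | move=> _].
have a_cap : a l = m%:Z by lia.
split; last lia.
rewrite a_cap in a_rec b_rec *.
case: (kk_last_col_tail l_in) => [[lN a1_cap] | tail_lt].
  have l_ge1 : (1 <= l)%N by lia.
  have l1_in : (l <= l.+1 <= N.+1)%N by rewrite leqnSn.
  have l1_in' : (l < l.+1 <= N.+1)%N by rewrite ltnSn.
  have := kk_col_mono inP_drop_penult l_ge1 l1_in; have [-> _] := IH l.+1 l1_in'.
  by have := kk_le_cap m N.+1 lam4 l N.+1; lia.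
rewrite -a'_rec.
exact: last_cols_capped_step p_gt0 (proj1 (andP (defects_bnd tail_lt))) a_rec b_rec.
Qed.

Lemma kk_drop_penult_inner i j : (1 <= i)%N -> (i <= j <= N)%N ->
  kk m N.+1 lam4 i j = kk m N.+2 lam i j.
Proof.
move: i j; apply: kk_ind => i j i_ge1 /andP[ij jN] IH.
have i_in : (1 <= i <= N.+1)%N by lia.
rewrite kk_rec ?(leqW jN) // [RHS]kk_rec ?(leqW (leqW jN)) //.
rewrite (big_nat_recr N.+1) /=; last lia.
rewrite (big_nat_recr N.+2) /=; last lia.
rewrite (big_nat_recr N.+1) /=; last lia.
have [-> _] := kk_drop_penult_col i_in.
have eq_row : \sum_(j.+1 <= l < N.+1) kk m N.+1 lam4 i l = \sum_(j.+1 <= l < N.+1) kk m N.+2 lam i l.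
  by apply: eq_big_nat => l l_in; apply: IH; lia.
have eq_col : \sum_(i.+1 <= l < j.+1) kk m N.+1 lam4 l j = \sum_(i.+1 <= l < j.+1) kk m N.+2 lam l j.
  by apply: eq_big_nat => l l_in; apply: IH; lia.
rewrite eq_row eq_col; congr (Order.min _ (ceil_div (_ + _) _)).
by set S := \sum_(j.+1 <= l < N.+1) _; lia.
Qed.

Lemma kk_drop_penult i j : (1 <= i)%N -> (i <= j <= N.+1)%N ->
  kk m N.+1 lam4 i j = if j == N.+1 then kk m N.+2 lam i j.+1 else kk m N.+2 lam i j.
Proof.
move=> i_ge1 /andP[ij jN]; case: eqP => [-> | /eqP j_ne].
  by have [] := kk_drop_penult_col (_ : 1 <= i <= N.+1)%N; first lia.
by apply: kk_drop_penult_inner; lia.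
Qed.

End LastTwoColumns.

Lemma inP_drop_last2 m N mu : inP m N.+2 mu ->
  inP m N (fun l => mu l - kk m N.+2 mu l N.+2 - kk m N.+2 mu l N.+1).
Proof.
move=> mu_in; apply: eq_inP (inP_drop_last (inP_drop_last mu_in)) => l l_in.
by rewrite kk_drop_last //; lia.
Qed.

Lemma kk_drop_last2 m N mu i j : (1 <= i)%N -> (i <= j <= N)%N ->
  kk m N (fun l => mu l - kk m N.+2 mu l N.+2 - kk m N.+2 mu l N.+1) i j = kk m N.+2 mu i j.
Proof.
move=> i_ge1 ij_in; rewrite -[RHS]kk_drop_last -?kk_drop_last //; try lia.
by apply: eq_kk => // l l_in; rewrite kk_drop_last //; lia.
Qed.

Theorem lemma4p5 (n m : nat) (lam : nat -> int) :
  (2 <= n)%N -> (0 < m)%N -> inP m n lam ->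
  let k := kk m n lam in
  let lam1 := fun i : nat => lam i.+1 in
  let lam2 := fun i : nat => lam i - k i n in
  let lam3 := fun i : nat => lam2 i - k i (n - 1)%N in
  let lam4 := fun i : nat => lam i - k i (n - 1)%N in
  let k1 := kk m (n - 1) lam1 in
  let k2 := kk m (n - 1) lam2 in
  let k3 := kk m (n - 2) lam3 in
  let k4 := kk m (n - 1) lam4 in
  [/\ inP m (n - 1) lam1, inP m (n - 1) lam2, inP m (n - 1) lam4 &
      inP m (n - 2) lam3] /\
  [/\
      (forall i j : nat, (1 <= i <= j)%N -> (j <= n - 1)%N -> k1 i j = k i.+1 j.+1),
      (forall i j : nat, (1 <= i <= j)%N -> (j <= n - 1)%N -> k2 i j = k i j),
      (forall i j : nat, (1 <= i <= j)%N -> (j <= n - 2)%N -> k3 i j = k i j),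
      (forall i j : nat, (1 <= i <= j)%N -> (j <= n - 2)%N -> k3 i j = k4 i j) &
      (forall i j : nat, (1 <= i <= j)%N -> (j <= n - 1)%N ->
         k4 i j = if j == (n - 1)%N then k i j.+1 else k i j)].
Proof.
case: n => [|[|N]] // _ _ lam_in /=; rewrite !subSS !subn0.
split; split.
- exact: inP_behead.
- exact: inP_drop_last.
- exact: inP_drop_penult.
- exact: inP_drop_last2.
- by move=> i j /andP[i_ge1 ij] jN; apply: kk_behead; rewrite // ij.
- by move=> i j /andP[i_ge1 ij] jN; apply: kk_drop_last; rewrite // ij.
- by move=> i j /andP[i_ge1 ij] jN; apply: kk_drop_last2; rewrite // ij.
- move=> i j /andP[i_ge1 ij] jN.
  rewrite kk_drop_last2 ?ij // kk_drop_penult ?ij ?(leqW jN) //.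
  by rewrite ifN_eq // neq_ltn ltnS jN.
- by move=> i j /andP[i_ge1 ij] jN; apply: kk_drop_penult; rewrite // ij.
Qed.
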